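(* Let $r>1$ be an integer and let $\sigma$ be a morphism on the alphabet $\{0,\dots,r-1\}$ which is non-erasing, i.e. $|\sigma(i)|\ge 1$ for all $i\in\{0,\dots,r-1\}$. Let $L=(|\sigma(0)|,\dots,|\sigma(r-1)|)$ be its length vector and $M$ its incidence matrix. Let $x$ be a one-sided infinite fixed point of $\sigma$. If $L$ is a left eigenvector of $M$ (i.e. $LM=\lambda L$ for some real $\lambda$), then $x$ is $q$-automatic, where $q$ is the spectral radius of $M$ (in particular $q$ is an integer).
   Context: A morphism $\sigma$ on a finite alphabet $\mathcal A$ extends to finite and infinite words by concatenation. Its incidence matrix $M$ is the $|\mathcal A|\times|\mathcal A|$ matrix with $M_{i,j}$ equal to the number of occurrences of the letter $i$ in $\sigma(j)$ (so column sums are the lengths $|\sigma(j)|$). A morphism is $q$-uniform if all images of letters have length $q$. For an integer $q\ge 2$, a sequence is $q$-automatic if it is the image under a letter-to-letter map of a fixed point of a $q$-uniform morphism. *)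

From HB Require Import structures.
From mathcomp Require Import all_boot all_order all_algebra all_field.
Set Implicit Arguments. Unset Strict Implicit. Unset Printing Implicit Defensive.
Import Order.TTheory GRing.Theory Num.Theory.
Local Open Scope ring_scope.

Definition morphism (r : nat) := 'I_r -> seq 'I_r.

Definition non_erasing r (s : morphism r) := forall i, (0 < size (s i))%N.

Definition uniform r (s : morphism r) (q : nat) := forall i, size (s i) = q.

Definition img_prefix r (s : morphism r) (x : nat -> 'I_r) (n : nat) : seq 'I_r :=
  flatten [seq s (x i) | i <- iota 0 n].

(* x is a fixed point of s : s(x) = x, i.e. for every n, the image of the
   length-n prefix of x is a prefix of x. *)
Definition is_fixed_point r (s : morphism r) (x : nat -> 'I_r) : Prop :=
  forall n, img_prefix s x n = [seq x i | i <- iota 0 (size (img_prefix s x n))].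

Definition incidence_matrix r (s : morphism r) : 'M[algC]_r :=
  \matrix_(i, j) (count_mem i (s j))%:R.

Definition length_vector r (s : morphism r) : 'rV[algC]_r :=
  \row_j (size (s j))%:R.

Definition is_spectral_radius n (A : 'M[algC]_n) (rho : algC) : Prop :=
  (exists a, eigenvalue A a /\ `|a| = rho) /\
  (forall a, eigenvalue A a -> `|a| <= rho).

Definition automatic (q : nat) r (x : nat -> 'I_r) : Prop :=
  (2 <= q)%N /\
  exists (k : nat) (tau : morphism k) (z : nat -> 'I_k) (f : 'I_k -> 'I_r),
    uniform tau q /\ is_fixed_point tau z /\ forall n, x n = f (z n).

(* The j-th
   entry of L M is |sigma(sigma(j))|, so |sigma(sigma(a))| = lam |sigma(a)|.

   Algebraic part: lam = |sigma(sigma(a))| / |sigma(a)| is a nonnegative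
   rational eigenvalue of the integer matrix M, hence a natural number q; and
   since L is a positive left eigenvector of the nonnegative matrix M, every
   eigenvalue has modulus at most q (a Perron-type bound), so q is the
   spectral radius of M.

   Combinatorial part (uniformization): if |sigma(sigma(a))| = q |sigma(a)|
   for every letter a, label each position m of x = sigma(x) by (a, k) when
   m is the k-th position of the block sigma(a) produced by a letter x_i = a.
   As x = sigma(sigma(x)), the q |sigma(a)| positions of sigma(sigma(x_i))
   split into |sigma(a)| runs of q consecutive positions, the k-th of which
   is nq, ..., nq + q - 1 for the position n labelled (a, k); the labels of
   that run depend only on (a, k).  So the label word is a fixed point of a
   q-uniform morphism on finitely many labels, and x is a letter-to-letter
   image of it. *)
From HB Require Import structures.
From mathcomp Require Import all_boot all_order all_algebra all_field zify.
Set Implicit Arguments. Unset Strict Implicit. Unset Printing Implicit Defensive.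
Import Order.TTheory GRing.Theory Num.Theory.

Section Words.
Variables (T : Type) (s : T -> seq T).

Definition img (w : seq T) : seq T := flatten (map s w).

Lemma img_cat u v : img (u ++ v) = img u ++ img v.
Proof. by rewrite /img map_cat flatten_cat. Qed.

Lemma img_cons a u : img (a :: u) = s a ++ img u.
Proof. by []. Qed.

Lemma img_seq1 a : img [:: a] = s a.
Proof. by rewrite img_cons cats0. Qed.

Lemma size_img_ge w : (forall a, 0 < size (s a))%N -> (size w <= size (img w))%N.
Proof.
move=> ne; elim: w => [|a w IH] //.
by rewrite img_cons size_cat /=; have := ne a; lia.
Qed.

Lemma size_img2 q w : (forall a, size (img (s a)) = q * size (s a))%N ->
  size (img (img w)) = (q * size (img w))%N.
Proof.
move=> hq; elim: w => [|a w IH] /=; first by rewrite muln0.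
by rewrite img_cons img_cat !size_cat hq IH mulnDr.
Qed.

(* [locate w p] is the pair (a, k) such that position p of s(w) is the k-th
   letter of the block s(a) contributed by a letter a of w; d is returned
   when p lies beyond s(w). *)
Variable d : T * nat.
Fixpoint locate (w : seq T) (p : nat) : T * nat :=
  if w is a :: w' then
    if (p < size (s a))%N then (a, p) else locate w' (p - size (s a))
  else d.

Lemma locate_shift u v p : locate (u ++ v) (size (img u) + p) = locate v p.
Proof.
elim: u => [|a u IH] //=.
by rewrite size_cat -addnA ltnNge leq_addr /= addKn.
Qed.

Lemma locate_catl u v p : (p < size (img u))%N -> locate (u ++ v) p = locate u p.
Proof.
elim: u p => [|a u IH] p //; rewrite img_cons size_cat /= => hp.
by case: ifP => // /negbT hlt; apply: IH; lia.
Qed.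

Lemma locateP w p d0 : (p < size (img w))%N -> exists i,
  [/\ (i < size w)%N, (locate w p).1 = nth d.1 w i,
      (size (img (take i w)) + (locate w p).2 = p)%N,
      ((locate w p).2 < size (s (locate w p).1))%N &
      nth d0 (img w) p = nth d0 (s (locate w p).1) (locate w p).2].
Proof.
elim: w p => [|a w IH] p //; rewrite img_cons size_cat /= => hp.
case: ifP => hlt.
  by exists 0%N; split => //; rewrite nth_cat hlt.
have [|i [i1 i2 i3 i4 i5]] := IH (p - size (s a))%N; first by lia.
exists i.+1; split => //=.
- by rewrite img_cons size_cat; lia.
- by rewrite nth_cat hlt -i5.
Qed.
End Words.

Definition prefix_of (T : Type) (x : nat -> T) (n : nat) : seq T :=
  [seq x i | i <- iota 0 n].

Definition fixed_point (T : Type) (s : T -> seq T) (x : nat -> T) : Prop :=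
  forall n, img s (prefix_of x n) = prefix_of x (size (img s (prefix_of x n))).

Section Prefixes.
Variables (T : Type) (x : nat -> T).

Lemma size_prefix_of n : size (prefix_of x n) = n.
Proof. by rewrite size_map size_iota. Qed.

Lemma prefix_ofD m n :
  prefix_of x (m + n) = prefix_of x m ++ [seq x i | i <- iota m n].
Proof. by rewrite /prefix_of iotaD map_cat. Qed.

Lemma prefix_ofS n : prefix_of x n.+1 = rcons (prefix_of x n) (x n).
Proof. by rewrite -addn1 prefix_ofD cats1. Qed.

Lemma nth_prefix_of d n m : (m < n)%N -> nth d (prefix_of x n) m = x m.
Proof. by move=> h; rewrite (nth_map 0%N) ?size_iota // nth_iota. Qed.

Lemma take_prefix_of i n : (i <= n)%N -> take i (prefix_of x n) = prefix_of x i.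
Proof. by move=> h; rewrite -map_take take_iota (minn_idPl h). Qed.
End Prefixes.

Lemma fixed_point_map (T U : Type) (s : T -> seq T) (t : U -> seq U) (h : T -> U) x :
  (forall a, t (h a) = map h (s a)) -> fixed_point s x -> fixed_point t (h \o x).
Proof.
move=> th fx n.
have mapE m : prefix_of (h \o x) m = map h (prefix_of x m) by rewrite /prefix_of -map_comp.
have imgE : img t (prefix_of (h \o x) n) = map h (img s (prefix_of x n)).
  by rewrite mapE /img map_flatten -!map_comp; congr flatten; apply: eq_map => a /=.
by rewrite imgE size_map mapE {1}fx.
Qed.

Lemma is_fixed_pointE r (s : morphism r) x : is_fixed_point s x <-> fixed_point s x.
Proof.
have E n : img_prefix s x n = img s (prefix_of x n).
  by rewrite /img_prefix /img /prefix_of -map_comp.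
by split=> fx n; have := fx n; rewrite E.
Qed.

Lemma automatic_of_finType (T : finType) (q r : nat) (t : T -> seq T)
    (z : nat -> T) (f : T -> 'I_r) (x : nat -> 'I_r) :
  (2 <= q)%N -> (forall c, size (t c) = q) -> fixed_point t z ->
  (forall n, x n = f (z n)) -> automatic q x.
Proof.
move=> q_ge2 t_unif z_fixed xE; split=> //.
pose t' : morphism #|T| := fun c => map enum_rank (t (enum_val c)).
exists #|T|, t', (enum_rank \o z), (f \o enum_val); split; [|split].
- by move=> c; rewrite size_map t_unif.
- by apply/is_fixed_pointE; apply: fixed_point_map z_fixed => a; rewrite /t' enum_rankK.
- by move=> n; rewrite /= enum_rankK.
Qed.

Section Uniformization.
Variables (r q : nat) (s : morphism r) (x : nat -> 'I_r).
Hypothesis s_ne : non_erasing s.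
Hypothesis x_fixed : fixed_point s x.
Hypothesis img2_size : forall a, size (img s (s a)) = (q * size (s a))%N.

Local Notation X := (prefix_of x).
Local Notation locate := (locate s (x 0%N, 0%N)).

Lemma lt_size_img_prefix m : (m < size (img s (X m.+1)))%N.
Proof. by have := size_img_ge (X m.+1) s_ne; rewrite size_prefix_of. Qed.

(* Since x = s(x), every position m of x lies in a block s(x_i); [label m] is
   the pair (x_i, offset of m in that block). *)
Definition label (m : nat) : 'I_r * nat := locate (X m.+1) m.

Lemma labelE n m : (m < size (img s (X n)))%N -> label m = locate (X n) m.
Proof.
move=> mn; have m_lt := lt_size_img_prefix m; rewrite /label.
case: (leqP n m.+1) => hn.
  by rewrite -(subnKC hn) prefix_ofD locate_catl.
by rewrite -(subnKC (ltnW hn)) prefix_ofD locate_catl.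
Qed.

Lemma labelP m : exists i,
  [/\ (label m).1 = x i, (size (img s (X i)) + (label m).2 = m)%N,
      ((label m).2 < size (s (label m).1))%N &
      x m = nth (x m) (s (label m).1) (label m).2].
Proof.
have [i [i_lt l1 l2 l_lt lE]] := locateP (x 0%N, 0%N) (x m) (lt_size_img_prefix m).
rewrite size_prefix_of in i_lt.
exists i; split => //.
- by rewrite /label l1 nth_prefix_of.
- by rewrite /label; rewrite take_prefix_of ?(ltnW i_lt) in l2.
- by rewrite /label -lE x_fixed nth_prefix_of ?lt_size_img_prefix.
Qed.

(* As x = s(s(x)) and |s(s(w))| = q |s(w)|, the block s(s(x_b)) occupies the
   positions q |s(x_0 ... x_{b-1})| + p, p < q |s(x_b)|, of x; their labels
   are read off s(x_b) alone. *)
Lemma label_block b p : (p < q * size (s (x b)))%N ->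
  label (q * size (img s (X b)) + p) = locate (s (x b)) p.
Proof.
move=> p_lt.
have XE : X (size (img s (X b.+1))) = img s (X b) ++ s (x b).
  by rewrite -x_fixed prefix_ofS -cats1 img_cat img_seq1.
rewrite (labelE (n := size (img s (X b.+1)))).
  by rewrite XE -(size_img2 _ img2_size) locate_shift.
by rewrite XE img_cat size_cat (size_img2 _ img2_size) img2_size; lia.
Qed.

(* Automaton states: labels (a, k), with k bounded by the maximal block length. *)
Definition max_len : nat := \max_(a < r) size (s a).
Definition to_state (l : 'I_r * nat) : 'I_r * 'I_max_len.+1 := (l.1, inord l.2).

(* Offsets of labels are below max_len, so [to_state] loses no information. *)
Lemma inord_offset a k : (k < size (s a))%N -> (inord k : 'I_max_len.+1) = k :> nat.
Proof. by move=> k_lt; rewrite inordK // ltnS (leq_trans (ltnW k_lt)) ?leq_bigmax. Qed.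

(* The q-uniform morphism on states: (a, k) maps to the labels found at
   positions kq, ..., kq + q - 1 of s(s(a)). *)
Definition label_morphism (c : 'I_r * 'I_max_len.+1) : seq ('I_r * 'I_max_len.+1) :=
  [seq to_state (locate (s c.1) p) | p <- iota (c.2 * q) q].

Definition label_word (m : nat) := to_state (label m).

Definition state_letter (c : 'I_r * 'I_max_len.+1) : 'I_r := nth c.1 (s c.1) c.2.

Lemma label_morphism_word n :
  label_morphism (label_word n) = [seq label_word j | j <- iota (n * q) q].
Proof.
have [i [la lk l_lt _]] := labelP n.
case E: (label n) la lk l_lt => [a k] /= la lk l_lt.
rewrite /label_morphism /label_word E /= (inord_offset l_lt).
rewrite -[k * q]addn0 -[n * q]addn0 !iotaDl -!map_comp.
apply/eq_in_map => j; rewrite mem_iota => /andP [_ j_lt] /=.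
rewrite -lk la mulnDl [(size _ * q)%N]mulnC -addnA label_block //.
have : (k.+1 * q <= size (s (x i)) * q)%N by rewrite leq_mul2r -la l_lt orbT.
by rewrite mulSn; lia.
Qed.

Lemma label_word_fixed : fixed_point label_morphism label_word.
Proof.
have imgE n : img label_morphism (prefix_of label_word n) = prefix_of label_word (n * q).
  elim: n => [|n IH] //.
  by rewrite prefix_ofS -cats1 img_cat IH img_seq1 label_morphism_word mulSnr prefix_ofD.
by move=> n; rewrite imgE size_prefix_of.
Qed.

Lemma label_word_letter n : x n = state_letter (label_word n).
Proof.
have [i [_ _ l_lt ->]] := labelP n.
rewrite /state_letter /label_word; case: (label n) l_lt => a k /= l_lt.
by rewrite (inord_offset l_lt); apply: set_nth_default.
Qed.

(* |s(x_0)| > 1 forces q >= 2: s(s(x_0)) contains s(x_0) followed by at least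
   |s(x_0)| - 1 further letters. *)
Lemma uniform_length_ge2 : (1 < size (s (x 0%N)))%N -> (2 <= q)%N.
Proof.
move=> h; have [l l_eq] : exists l, size (s (x 0%N)) = l.+2.
  by exists (size (s (x 0%N))).-2; lia.
have sx0 : s (x 0%N) = x 0%N :: [seq x i | i <- iota 1 l.+1].
  by have := x_fixed 1; rewrite [X 1]/prefix_of /= img_seq1 l_eq.
have := img2_size (x 0%N); rewrite {1}sx0 img_cons size_cat l_eq.
have := size_img_ge [seq x i | i <- iota 1 l.+1] s_ne.
rewrite size_map size_iota; nia.
Qed.

Theorem automatic_of_uniform_lengths : (1 < size (s (x 0%N)))%N -> automatic q x.
Proof.
move=> h; apply: (automatic_of_finType (t := label_morphism) (z := label_word)).
- exact: uniform_length_ge2.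
- by move=> c; rewrite size_map size_iota.
- exact: label_word_fixed.
- exact: label_word_letter.
Qed.
End Uniformization.

Lemma size_img_count r (s : morphism r) w :
  size (img s w) = (\sum_(i < r) count_mem i w * size (s i))%N.
Proof.
elim: w => [|a w IH]; first by rewrite big1.
rewrite img_cons size_cat IH /=.
have -> : (\sum_(i < r) count_mem i (a :: w) * size (s i) =
    \sum_(i < r) ((a == i) * size (s i) + count_mem i w * size (s i)))%N.
  by apply: eq_bigr => i _; rewrite /= mulnDl.
rewrite big_split /=; congr (_ + _)%N.
rewrite (bigD1 a) //= eqxx mul1n big1 ?addn0 // => i /negbTE.
by rewrite eq_sym => ->.
Qed.

Local Open Scope ring_scope.

Lemma length_vector_mul r (s : morphism r) j :
  (length_vector s *m incidence_matrix s) 0 j = (size (img s (s j)))%:R.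
Proof.
rewrite !mxE size_img_count natr_sum; apply: eq_bigr => i _.
by rewrite !mxE natrM mulrC.
Qed.

(* Take an eigenvector v for a
   and a coordinate j maximising c = |v_j| / L_j; then
   |a| |v_j| <= sum_i |v_i| M_ij <= c (L M)_j = lam |v_j|. *)
Lemma eigenvalue_norm_le n (M : 'M[algC]_n) (L : 'rV[algC]_n) (lam a : algC) :
  (forall i j, 0 <= M i j) -> (forall j, 0 < L 0 j) ->
  L *m M = lam *: L -> eigenvalue M a -> `|a| <= lam.
Proof.
move=> M_ge0 L_gt0 LM /eigenvalueP [v va v_nz].
have [i0 vi0] : exists i0, v 0 i0 != 0.
  apply/existsP; apply: contraNT v_nz; rewrite negb_exists => /forallP v0.
  by apply/eqP/rowP => i; rewrite mxE; apply/eqP/negPn.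
pose c i := `|v 0 i| / L 0 i.
have c_ge0 i : 0 <= c i by rewrite divr_ge0 // ltW.
have [j _ j_max] := @extremum_inP _ _ (fun u w : algC => w <= u) i0 predT c
  (fun i _ => lexx (c i)) (fun _ _ _ _ _ _ => fun h1 h2 => le_trans h2 h1)
  (fun i k _ _ => real_leVge (ger0_real (c_ge0 k)) (ger0_real (c_ge0 i))) isT.
have v_le i : `|v 0 i| <= c j * L 0 i by rewrite -ler_pdivrMr // j_max.
have vj : `|v 0 j| = c j * L 0 j by rewrite divfK ?gt_eqF.
have vj_gt0 : 0 < `|v 0 j|.
  rewrite vj mulr_gt0 // (lt_le_trans _ (j_max i0 isT)) //.
  by rewrite divr_gt0 // normr_gt0.
rewrite -(ler_pM2r vj_gt0).
have -> : `|a| * `|v 0 j| = `|\sum_i v 0 i * M i j|.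
  have : (v *m M) 0 j = a * v 0 j by rewrite va mxE.
  by rewrite mxE => ->; rewrite normrM.
apply: (le_trans (ler_norm_sum _ _ _)); apply: (@le_trans _ _ (c j * (L *m M) 0 j)).
  rewrite mxE mulr_sumr; apply: ler_sum => i _.
  by rewrite normrM (ger0_norm (M_ge0 i j)) mulrA ler_wpM2r.
by rewrite LM mxE vj mulrCA.
Qed.

(* A nonnegative rational eigenvalue of an integer matrix is a natural number:
   it is a root of the monic integral characteristic polynomial, hence a
   rational algebraic integer, hence an integer. *)
Lemma eigenvalue_int_mx_nat n (A : 'M[int]_n) (lam : algC) :
  eigenvalue (map_mx intr A) lam -> lam \in Crat -> 0 <= lam -> lam \is a Num.nat.
Proof.
move=> eig lam_rat lam_ge0.
have lam_Aint : lam \in Aint.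
  apply: (root_monic_Aint (p := char_poly (map_mx intr A))).
  - by rewrite -eigenvalue_root_char.
  - exact: char_poly_monic.
  - rewrite -map_char_poly; apply/polyOverP => i; rewrite coef_map /=.
    exact: rpred_int.
by rewrite natrEint lam_ge0 andbT Cint_rat_Aint.
Qed.

Theorem theorem1 (r : nat) (sigma : morphism r) (x : nat -> 'I_r) :
  (1 < r)%N ->
  non_erasing sigma ->
  is_fixed_point sigma x ->
  (1 < size (sigma (x 0%N)))%N ->
  (exists lambda : algC, lambda \is Num.real /\
     length_vector sigma *m incidence_matrix sigma = lambda *: length_vector sigma) ->
  exists q : nat,
    is_spectral_radius (incidence_matrix sigma) q%:R /\ automatic q x.
Proof.
move=> _ ne /is_fixed_pointE fx h1 [lam [_ LM]].
set M := incidence_matrix sigma; set L := length_vector sigma.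
have img2E j : (size (img sigma (sigma j)))%:R = lam * (size (sigma j))%:R.
  by rewrite -length_vector_mul -/M -/L LM !mxE.
have L_gt0 j : 0 < L 0 j by rewrite mxE ltr0n ne.
have M_ge0 i j : 0 <= M i j by rewrite mxE ler0n.
have eigL : eigenvalue M lam.
  apply/eigenvalueP; exists L => //; apply: contraTneq (L_gt0 (x 0%N)) => ->.
  by rewrite mxE ltxx.
have len0 : (size (sigma (x 0%N)))%:R != 0 :> algC by rewrite pnatr_eq0 -lt0n ne.
have lamE : lam = (size (img sigma (sigma (x 0%N))))%:R / (size (sigma (x 0%N)))%:R.
  by rewrite img2E mulfK.
have /natrP [q lam_q] : lam \is a Num.nat.
  pose Mz : 'M[int]_r := \matrix_(i, j) (count_mem i (sigma j))%:Z.
  have MzE : M = map_mx intr Mz by apply/matrixP => i j; rewrite !mxE.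
  apply: (eigenvalue_int_mx_nat (A := Mz)); first by rewrite -MzE.
    by rewrite lamE rpred_div ?rpred_nat.
  by rewrite lamE divr_ge0 ?ler0n.
exists q; split.
  split; first by exists lam; split => //; rewrite lam_q normr_nat.
  by move=> a /(eigenvalue_norm_le M_ge0 L_gt0 LM); rewrite lam_q.
apply: automatic_of_uniform_lengths => // a.
by apply/eqP; rewrite -(eqr_nat algC) natrM -lam_q img2E.
Qed.
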